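(* Let $A_0$, $\theta$ and $\gamma$ be as follows: - $A_0$ is feasible for (GDSP) with $\mathrm{assoc}_S(A_0)>0$; - $\theta$ is the minimum of $\mathrm{pen}(A)$ over nonempty infeasible $A\subseteq V'$; - $\gamma>\dfrac{\mathrm{vol}_d(V)}{\theta}\cdot\dfrac{\mathrm{vol}_g(A_0)+\nu_S}{\mathrm{assoc}_S(A_0)}$. Then the continuous problem $$\min_{f\in\mathbb{R}^m_+\setminus\{0\}}\frac{\mathrm{vol}_g^L(f)+\nu_S\,\mathrm{unit}^L(f)+\gamma\,\mathrm{pen}^L(f)}{\mathrm{assoc}_S^L(f)}$$ (with $x/0=+\infty$ for $x>0$) attains its minimum, and this minimum equals the reciprocal of the optimal value of (GDSP). Moreover, for any minimizer $f^*$, the set among $\{j\in V':f^*_j\ge f^*_i\}$, $i=1,\dots,m$, minimizing $$\frac{\mathrm{vol}_g(A)+\nu_S\,\mathrm{unit}(A)+\gamma\,\mathrm{pen}(A)}{\mathrm{assoc}_S(A)}$$ is an optimal solution of (GDSP).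
   Context: Let $V$ be a finite vertex set with symmetric nonnegative weights $w_{ij}=w_{ji}\ge0$ and $w_{ii}=0$. - $d_i=\sum_{j\in V}w_{ij}$, and $\mathrm{vol}_h(A)=\sum_{i\in A}h_i$. - $\mathrm{assoc}(A)=\sum_{i,j\in A}w_{ij}$ (ordered pairs), and $\mathrm{cut}(A,B)=\sum_{i\in A,j\in B}w_{ij}$. - Fix $S\subseteq V$, $V'=V\setminus S$, $m=|V'|$ (identify $V'$ with $\{1,\dots,m\}$), and $d^S_i=\sum_{j\in S}w_{ij}$. - $g:V\to(0,\infty)$, $\mu_S=\mathrm{assoc}(S)$, $\nu_S=\mathrm{vol}_g(S)$. - $\mathrm{unit}(A)=1$ if $A\ne\emptyset$ and $0$ otherwise. - $\mathrm{assoc}_S(A)=\mathrm{vol}_d(A)-\mathrm{cut}(A,V'\setminus A)+\mathrm{vol}_{d^S}(A)+\mu_S\,\mathrm{unit}(A)$ for $A\subseteq V'$. Constraint data: $M_1,\dots,M_p\in[0,\infty)^V$; reals $k_j,l_j$; a symmetric $\mathrm{dist}\ge0$ with $\mathrm{dist}(u,u)=0$; and $d_0\ge0$. - $A\subseteq V'$ is feasible for (GDSP) if $A\ne\emptyset$, $k_j\le\mathrm{vol}_{M_j}(A)\le l_j$ for all $j$, and $\mathrm{dist}(u,v)\le d_0$ for all $u,v\in A$. - (GDSP) maximizes $\mathrm{assoc}_S(A)/(\mathrm{vol}_g(A)+\nu_S)$ over feasible $A$. Penalty: $\mathrm{pen}(\emptyset)=0$, and for $A\ne\emptyset$, $$\mathrm{pen}(A)=\sum_{j}\max\{0,\mathrm{vol}_{M_j}(A)-l_j\}+\sum_j\max\{0,k_j-\mathrm{vol}_{M_j}(A)\}+\sum_{u,v\in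 A}\max\{0,\mathrm{dist}(u,v)-d_0\}.$$ Lovasz extension of $F:2^{V'}\to\mathbb{R}$ with $F(\emptyset)=0$: for $f\in\mathbb{R}^m$ and a permutation $\pi$ with $f_{\pi(1)}\le\dots\le f_{\pi(m)}$, $B_i=\{\pi(i),\dots,\pi(m)\}$, $$F^L(f)=\sum_{i=1}^{m-1}F(B_{i+1})(f_{\pi(i+1)}-f_{\pi(i)})+F(V')f_{\pi(1)}.$$ *)

From HB Require Import structures.
From mathcomp Require Import all_boot all_order all_algebra.
Unset Printing Implicit Defensive.
Import Order.TTheory GRing.Theory Num.Theory.
Local Open Scope ring_scope.

Definition degree {R : realFieldType} {V : finType} (w : V -> V -> R) (i : V) : R :=
  \sum_(j : V) w i j.
Definition vol {R : realFieldType} {V : finType} (h : V -> R) (A : {set V}) : R :=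
  \sum_(i in A) h i.
Definition assoc {R : realFieldType} {V : finType} (w : V -> V -> R) (A : {set V}) : R :=
  \sum_(i in A) \sum_(j in A) w i j.
Definition cut {R : realFieldType} {V : finType} (w : V -> V -> R) (A B : {set V}) : R :=
  \sum_(i in A) \sum_(j in B) w i j.
Definition degS {R : realFieldType} {V : finType} (w : V -> V -> R) (S : {set V}) (i : V) : R :=
  \sum_(j in S) w i j.
Definition unit_set {R : realFieldType} {T : finType} (A : {set T}) : R :=
  if A == set0 then 0 else 1.

Definition Vp {V : finType} (S : {set V}) : finType := {x : V | x \in ~: S}.
Definition emb {V : finType} {S : {set V}} (A : {set Vp S}) : {set V} :=
  [set val x | x in A].

Definition assocS {R : realFieldType} {V : finType} (w : V -> V -> R) (S : {set V})
  (A : {set Vp S}) : R :=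
  vol (degree w) (emb A) - cut w (emb A) ((~: S) :\: emb A)
  + vol (degS w S) (emb A) + assoc w S * unit_set A.

Definition feasible {R : realFieldType} {V : finType} {p : nat}
  (M : 'I_p -> V -> R) (k l : 'I_p -> R) (dist : V -> V -> R) (d0 : R)
  (S : {set V}) (A : {set Vp S}) : Prop :=
  [/\ A != set0,
      (forall j, k j <= vol (M j) (emb A) <= l j) &
      (forall u v, u \in A -> v \in A -> dist (val u) (val v) <= d0)].

Definition pen {R : realFieldType} {V : finType} {p : nat}
  (M : 'I_p -> V -> R) (k l : 'I_p -> R) (dist : V -> V -> R) (d0 : R)
  (S : {set V}) (A : {set Vp S}) : R :=
  if A == set0 then 0 else
    \sum_(j < p) Num.max 0 (vol (M j) (emb A) - l j)
  + \sum_(j < p) Num.max 0 (k j - vol (M j) (emb A))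
  + \sum_(u in A) \sum_(v in A) Num.max 0 (dist (val u) (val v) - d0).

(* GDSP objective assoc_S(A) / (vol_g(A) + nu_S) *)
Definition gdsp_ratio {R : realFieldType} {V : finType} (w : V -> V -> R) (g : V -> R)
  (S : {set V}) (A : {set Vp S}) : R :=
  assocS w S A / (vol g (emb A) + vol g S).

Definition gdsp_optimal {R : realFieldType} {V : finType} {p : nat}
  (w : V -> V -> R) (g : V -> R) (M : 'I_p -> V -> R) (k l : 'I_p -> R)
  (dist : V -> V -> R) (d0 : R) (S : {set V}) (A : {set Vp S}) : Prop :=
  feasible M k l dist d0 S A /\
  forall B, feasible M k l dist d0 S B -> gdsp_ratio w g S B <= gdsp_ratio w g S A.

(* s is a permutation of T sorted so that f is nondecreasing along s
   (s = [pi(1); ...; pi(m)]); B_{i+1} = [set x in drop i s].  With the convention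
   f_{pi(0)} := 0, F^L(f) = sum_{i=0}^{m-1} F(B_{i+1}) (f_{pi(i+1)} - f_{pi(i)}),
   which is exactly the formula of the paper. *)
Definition lovasz {R : realFieldType} {T : finType} (F : {set T} -> R) (f : T -> R) : R :=
  let s := sort (fun x y => f x <= f y) (enum T) in
  let vals := map f s in
  \sum_(0 <= i < size s)
    F [set x in drop i s] * (nth 0 vals i - (if i is i'.+1 then nth 0 vals i' else 0)).

(* ---------- extended values: None stands for +infinity ---------- *)
Definition ext_le {R : realFieldType} (x y : option R) : bool :=
  match x, y with
  | _, None => true
  | None, Some _ => false
  | Some a, Some b => a <= b
  end.
(* x / 0 := +infinity (the numerators used below are always > 0) *)
Definition xdiv {R : realFieldType} (x y : R) : option R :=
  if y == 0 then None else Some (x / y).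

Definition cont_obj {R : realFieldType} {V : finType} {p : nat}
  (w : V -> V -> R) (g : V -> R) (M : 'I_p -> V -> R) (k l : 'I_p -> R)
  (dist : V -> V -> R) (d0 gamma : R) (S : {set V}) (f : Vp S -> R) : option R :=
  xdiv (lovasz (fun A => vol g (emb A)) f + vol g S * lovasz unit_set f
        + gamma * lovasz (pen M k l dist d0 S) f)
       (lovasz (assocS w S) f).

Definition set_obj {R : realFieldType} {V : finType} {p : nat}
  (w : V -> V -> R) (g : V -> R) (M : 'I_p -> V -> R) (k l : 'I_p -> R)
  (dist : V -> V -> R) (d0 gamma : R) (S : {set V}) (A : {set Vp S}) : option R :=
  xdiv (vol g (emb A) + vol g S * unit_set A + gamma * pen M k l dist d0 S A)
       (assocS w S A).

Definition cont_minimizer {R : realFieldType} {V : finType} {p : nat}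
  (w : V -> V -> R) (g : V -> R) (M : 'I_p -> V -> R) (k l : 'I_p -> R)
  (dist : V -> V -> R) (d0 gamma : R) (S : {set V}) (f : Vp S -> R) : Prop :=
  [/\ (forall i, 0 <= f i), (exists i, f i != 0) &
      forall h : Vp S -> R, (forall i, 0 <= h i) -> (exists i, h i != 0) ->
        ext_le (cont_obj w g M k l dist d0 gamma S f) (cont_obj w g M k l dist d0 gamma S h)].

Definition level_set {T : finType} {R : realFieldType} (f : T -> R) (i : T) : {set T} :=
  [set j | f i <= f j].

(* For f >= 0 the Lovasz extension is a nonnegative combination of the values of the set
   function on the upper level sets of f, and it takes the value F(A) at the indicator of A.
   Hence, if N(A) >= v * D(A) for every set A, then N^L >= v * D^L on nonnegative vectors,
   and equality at some f forces N = v * D on a level set of f with D nonzero.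
   Apply this to v = 1 / opt, where opt is the optimal value of (GDSP), to
   N = vol_g + nu_S unit + gamma pen, and to D = assoc_S.  On feasible sets N = vol_g + nu_S,
   so N >= v * D with equality exactly on the optimal sets.  On an infeasible set the choice
   of gamma gives gamma * pen >= gamma * theta > v * vol_d(V) >= v * assoc_S.  So the
   continuous minimum is v, attained at the indicator of an optimal set, and a minimizing
   level set of any minimizer satisfies N = v * D, hence is feasible and optimal. *)

From HB Require Import structures.
From mathcomp Require Import all_boot all_order all_algebra.
From mathcomp Require Import ring lra.
Import Order.TTheory GRing.Theory Num.Theory.
Local Open Scope ring_scope.

Section LovaszExtension.
Context {R : realFieldType} {T : finType}.
Implicit Types (F : {set T} -> R) (f : T -> R) (A : {set T}).

Definition lovasz_order f : seq T := sort (fun x y => f x <= f y) (enum T).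
Definition lovasz_value f i : R := nth 0 (map f (lovasz_order f)) i.
Definition lovasz_tail f i : {set T} := [set x in drop i (lovasz_order f)].
Definition lovasz_jump f i : R :=
  lovasz_value f i - (if i is i'.+1 then lovasz_value f i' else 0).

Lemma lovaszE F f :
  lovasz F f = \sum_(i < size (lovasz_order f)) F (lovasz_tail f i) * lovasz_jump f i.
Proof. by rewrite /lovasz /= big_mkord. Qed.

Lemma size_lovasz_order f : size (lovasz_order f) = #|T|.
Proof. by rewrite size_sort cardE. Qed.

Lemma mem_lovasz_order f x : x \in lovasz_order f.
Proof. by rewrite mem_sort mem_enum. Qed.

Lemma lovasz_order_mono f x0 i j : (i <= j < size (lovasz_order f))%N ->
  f (nth x0 (lovasz_order f) i) <= f (nth x0 (lovasz_order f) j).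
Proof.
case/andP=> le_ij lt_j.
have le_tr : transitive (fun x y : T => f x <= f y) by move=> y x z; exact: le_trans.
apply: (sorted_leq_nth le_tr (fun x => lexx (f x))) => //.
- by apply: sort_sorted => x y; exact: le_total.
- by rewrite inE (leq_ltn_trans le_ij).
Qed.

Lemma lovasz_valueE f x0 i : (i < size (lovasz_order f))%N ->
  lovasz_value f i = f (nth x0 (lovasz_order f) i).
Proof. exact: nth_map. Qed.

Lemma lovasz_jump_ge0 f i : (forall x, 0 <= f x) -> (i < size (lovasz_order f))%N ->
  0 <= lovasz_jump f i.
Proof.
move=> f0 lt_i; have x0 : T by case: (lovasz_order f) lt_i => [|x].
rewrite /lovasz_jump; case: i lt_i => [|i] lt_i; first by rewrite subr0 (lovasz_valueE f x0).
rewrite subr_ge0 (lovasz_valueE f x0) ?(ltnW lt_i) // (lovasz_valueE f x0) //.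
by rewrite lovasz_order_mono ?leqnSn.
Qed.

Lemma lovasz_jump_sum f n : \sum_(i < n.+1) lovasz_jump f i = lovasz_value f n.
Proof.
elim: n => [|n IHn]; first by rewrite big_ord1 /lovasz_jump subr0.
by rewrite big_ord_recr /= IHn /lovasz_jump addrC subrK.
Qed.

Lemma lovasz_value_max f x : f x <= lovasz_value f (size (lovasz_order f)).-1.
Proof.
have x_in := mem_lovasz_order f x.
have lt_last : ((size (lovasz_order f)).-1 < size (lovasz_order f))%N.
  by rewrite prednK ?leqnn //; case: (lovasz_order f) x_in.
rewrite (lovasz_valueE f x _ lt_last) -{1}(nth_index x x_in) lovasz_order_mono //.
by rewrite lt_last andbT -ltnS prednK ?index_mem //; case: (lovasz_order f) x_in.
Qed.

Lemma lovasz_tail_level f x0 i : (i < size (lovasz_order f))%N -> 0 < lovasz_jump f i ->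
  lovasz_tail f i = level_set f (nth x0 (lovasz_order f) i).
Proof.
move=> lt_i jump_gt0; apply/setP => x; rewrite !inE.
have x_in := mem_lovasz_order f x.
apply/idP/idP => [x_tail|le_x].
  rewrite -(nth_index x0 x_tail) nth_drop lovasz_order_mono // leq_addr /=.
  by rewrite -ltn_subRL -size_drop index_mem.
have [le_ix|lt_xi] := leqP i (index x (lovasz_order f)).
  rewrite -(nth_index x0 x_in) -(subnKC le_ix) -nth_drop mem_nth //.
  by rewrite size_drop ltn_sub2r // index_mem.
case: i lt_i jump_gt0 le_x lt_xi => // i lt_i.
rewrite /lovasz_jump (lovasz_valueE f x0) // (lovasz_valueE f x0) ?(ltnW lt_i) // subr_gt0.
move=> lt_prev le_x; rewrite ltnS => le_xi.
have := lovasz_order_mono f x0 (index x (lovasz_order f)) i.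
rewrite le_xi (ltnW lt_i) nth_index // => /(_ isT) le_x_prev.
by have := lt_le_trans lt_prev (le_trans le_x le_x_prev); rewrite ltxx.
Qed.

Lemma lovasz_ge0 F f : (forall A, 0 <= F A) -> (forall x, 0 <= f x) -> 0 <= lovasz F f.
Proof.
move=> F0 f0; rewrite lovaszE; apply: sumr_ge0 => i _.
by rewrite mulr_ge0 ?lovasz_jump_ge0.
Qed.

Lemma lovaszDZ F1 F2 F3 a b f :
  lovasz F1 f + a * lovasz F2 f + b * lovasz F3 f =
  lovasz (fun A => F1 A + a * F2 A + b * F3 A) f.
Proof.
rewrite !lovaszE !mulr_sumr -!big_split /=; apply: eq_bigr => i _.
by rewrite !mulrDl !mulrA.
Qed.

Definition indicator A : T -> R := fun x => (x \in A)%:R.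

Lemma lovasz_indicator F A : A != set0 -> lovasz F (indicator A) = F A.
Proof.
case/set0Pn=> a a_in; set f := indicator A.
have f0 x : 0 <= f x by exact: ler0n.
have tail_A i : (i < size (lovasz_order f))%N -> 0 < lovasz_jump f i -> lovasz_tail f i = A.
  move=> lt_i jump_gt0; rewrite (lovasz_tail_level f a _ lt_i jump_gt0).
  have : 0 < f (nth a (lovasz_order f) i).
    rewrite -(lovasz_valueE f a _ lt_i); move: jump_gt0; rewrite /lovasz_jump.
    case: i lt_i => [|i] lt_i; first by rewrite subr0.
    rewrite subr_gt0; apply: le_lt_trans.
    by rewrite (lovasz_valueE f a _ (ltnW lt_i)).
  rewrite {1}/f /indicator ltr0n lt0b => nth_in.
  by apply/setP => y; rewrite inE /f /indicator nth_in ler1n lt0b.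
have size_gt0 : (0 < size (lovasz_order f))%N.
  by rewrite size_lovasz_order; apply/card_gt0P; exists a.
transitivity (\sum_(i < size (lovasz_order f)) F A * lovasz_jump f i).
  rewrite lovaszE; apply: eq_bigr => i _.
  have [jump_gt0|] := ltP 0 (lovasz_jump f i); first by rewrite tail_A.
  by rewrite le_eqVlt ltNge lovasz_jump_ge0 // orbF => /eqP->; rewrite !mulr0.
rewrite -mulr_sumr -(prednK size_gt0) lovasz_jump_sum.
suff -> : lovasz_value f (size (lovasz_order f)).-1 = 1 by rewrite mulr1.
have := lovasz_value_max f a; rewrite {1}/f /indicator a_in => ge1.
apply: le_anti; rewrite ge1 andbT (lovasz_valueE f a) ?prednK //.
by rewrite /f /indicator lern1 leq_b1.
Qed.

End LovaszExtension.

Section LovaszRatio.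
Context {R : realFieldType} {T : finType} {N D : {set T} -> R} {v : R}.
Hypothesis D_ge0 : forall A, 0 <= D A.
Hypothesis N_ge_vD : forall A, v * D A <= N A.

Lemma lovasz_ge_ratio f : (forall x, 0 <= f x) -> v * lovasz D f <= lovasz N f.
Proof.
move=> f0; rewrite !lovaszE mulr_sumr; apply: ler_sum => i _.
by rewrite mulrA ler_wpM2r ?lovasz_jump_ge0.
Qed.

Lemma lovasz_ratio_ge f : (forall x, 0 <= f x) ->
  ext_le (Some v) (xdiv (lovasz N f) (lovasz D f)).
Proof.
move=> f0; rewrite /xdiv; case: eqP => //= /eqP nz_D.
have D_gt0 : 0 < lovasz D f by rewrite lt_def nz_D lovasz_ge0.
by rewrite ler_pdivlMr // lovasz_ge_ratio.
Qed.

Lemma lovasz_ratio_eq f : (forall x, 0 <= f x) ->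
  ext_le (xdiv (lovasz N f) (lovasz D f)) (Some v) ->
  xdiv (lovasz N f) (lovasz D f) = Some v.
Proof.
move=> f0; have := lovasz_ratio_ge _ f0.
by case: (xdiv _ _) => //= r ge_r le_r; rewrite (@le_anti _ _ r v) ?ge_r ?le_r.
Qed.

(* The gap N - v D is nonnegative on every tail set, so equality of the extensions
   forces equality on every tail carrying a positive jump. *)
Lemma lovasz_eq_ratio_level f : (forall x, 0 <= f x) ->
  lovasz N f = v * lovasz D f -> lovasz D f != 0 ->
  exists x, D (level_set f x) != 0 /\ N (level_set f x) = v * D (level_set f x).
Proof.
move=> f0 eq_ND nz_D.
pose gap (i : 'I_(size (lovasz_order f))) :=
  N (lovasz_tail f i) * lovasz_jump f i - v * (D (lovasz_tail f i) * lovasz_jump f i).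
have gap_ge0 i : 0 <= gap i by rewrite subr_ge0 mulrA ler_wpM2r ?lovasz_jump_ge0.
have gap0 : \sum_i gap i = 0 by rewrite sumrB -mulr_sumr -!lovaszE eq_ND subrr.
have [i nz_i] :
    exists i : 'I_(size (lovasz_order f)), D (lovasz_tail f i) * lovasz_jump f i != 0.
  apply/existsP; apply: contraNT nz_D; rewrite negb_exists => /forallP all0.
  by rewrite lovaszE big1 // => i _; apply/eqP/negbNE.
have jump_gt0 : 0 < lovasz_jump f i.
  by rewrite lt_def lovasz_jump_ge0 // andbT; apply: contraNneq nz_i => ->; rewrite mulr0.
pose x0 := enum_val (cast_ord (size_lovasz_order f) i).
exists (nth x0 (lovasz_order f) i); rewrite -(lovasz_tail_level f x0 _ (ltn_ord i) jump_gt0).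
split; first by apply: contraNneq nz_i => ->; rewrite mul0r.
have /eqP := psumr_eq0P (fun i _ => gap_ge0 i) gap0 (i := i) isT.
by rewrite subr_eq0 mulrA => /eqP /(mulIf (lt0r_neq0 jump_gt0)).
Qed.

Lemma lovasz_ratio_level f i : (forall x, 0 <= f x) ->
  xdiv (lovasz N f) (lovasz D f) = Some v ->
  (forall j, ext_le (xdiv (N (level_set f i)) (D (level_set f i)))
                    (xdiv (N (level_set f j)) (D (level_set f j)))) ->
  0 < D (level_set f i) /\ N (level_set f i) = v * D (level_set f i).
Proof.
move=> f0; rewrite /xdiv; case: eqP => // /eqP nz_D [ratio_v] min_i.
have [x [nz_Dx eq_x]] : exists x, D (level_set f x) != 0 /\
    N (level_set f x) = v * D (level_set f x).
  by apply: lovasz_eq_ratio_level; rewrite // -ratio_v divfK.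
move: (min_i x); rewrite (negbTE nz_Dx) eq_x mulfK //.
set L := level_set f i; case: eqP => //= /eqP nz_DL le_v.
have DL_gt0 : 0 < D L by rewrite lt_def nz_DL D_ge0.
split=> //; apply: le_anti; rewrite N_ge_vD andbT.
by rewrite -ler_pdivrMr.
Qed.

End LovaszRatio.

Lemma vol_ge0 {R : realFieldType} {V : finType} (h : V -> R) (B : {set V}) :
  (forall i, 0 <= h i) -> 0 <= vol h B.
Proof. by move=> h0; apply: sumr_ge0. Qed.

Lemma vol_gt0 {R : realFieldType} {V : finType} (h : V -> R) (B : {set V}) :
  (forall i, 0 < h i) -> B != set0 -> 0 < vol h B.
Proof.
move=> h_gt0 /set0Pn [x x_in]; rewrite /vol (bigD1 x) //=.
by rewrite ltr_wpDr ?h_gt0 // sumr_ge0 // => i _; apply: ltW.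
Qed.

Lemma unit_set_neq0 {R : realFieldType} {T : finType} (A : {set T}) :
  A != set0 -> unit_set A = 1 :> R.
Proof. by rewrite /unit_set => /negbTE->. Qed.

Lemma unit_set_ge0 {R : realFieldType} {T : finType} (A : {set T}) : 0 <= unit_set A :> R.
Proof. by rewrite /unit_set; case: ifP. Qed.

Lemma emb_eq0 {V : finType} {S : {set V}} (A : {set Vp S}) : (emb A == set0) = (A == set0).
Proof. by rewrite /emb imset_eq0. Qed.

Lemma emb_notin {V : finType} {S : {set V}} (A : {set Vp S}) x : x \in emb A -> x \notin S.
Proof. by case/imsetP => y _ ->; have := valP y; rewrite inE. Qed.

Lemma sum_pair_indicator {R : realFieldType} {V : finType} (P Q : pred V) (F : V -> V -> R) :
  \sum_(i | P i) \sum_(j | Q j) F i j =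
  \sum_(q : V * V) (P q.1)%:R * (Q q.2)%:R * F q.1 q.2.
Proof.
rewrite pair_big big_mkcond; apply: eq_bigr => q _.
by case: (P q.1); case: (Q q.2); rewrite ?mul1r ?mul0r.
Qed.

Section AssocS.
Context {R : realFieldType} {V : finType} {w : V -> V -> R}.
Hypotheses (w_sym : forall i j, w i j = w j i) (w_ge0 : forall i j, 0 <= w i j).

Lemma assocS_set0 S : assocS w S set0 = 0.
Proof.
by rewrite /assocS /emb imset0 /vol /cut /unit_set eqxx !big_set0 mulr0 subrr !addr0.
Qed.

(* Each ordered pair (i, j) contributes w i j to assoc_S(A) at most once: from
   A x (A u S), from S x A, or from S x S. *)
Lemma assocS_pair_sum S A : exists c : V * V -> R, (forall q, 0 <= c q <= 1) /\
  assocS w S A = \sum_(q : V * V) c q * w q.1 q.2.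
Proof.
set E := emb A; set u : R := unit_set A.
have E_S x : x \in E -> x \notin S := @emb_notin V S A x.
exists (fun q => (q.1 \in E)%:R * (1 - (q.2 \in (~: S) :\: E)%:R)
                 + (q.1 \in S)%:R * (q.2 \in E)%:R + (q.1 \in S)%:R * (q.2 \in S)%:R * u).
split.
  have u01 : u = 0 \/ u = 1 by rewrite /u /unit_set; case: ifP; [left|right].
  move=> [x y] /=; have := E_S x; have := E_S y; rewrite !inE.
  by case: (x \in E); case: (y \in E); case: (x \in S); case: (y \in S) => //= Ey Ex;
    rewrite ?(Ex isT) ?(Ey isT) //; case: u01 => ->; lra.
have vol_degS : vol (degS w S) E = \sum_(i in S) \sum_(j in E) w i j.
  rewrite /vol /degS exchange_big.
  by apply: eq_bigr => i _; apply: eq_bigr => j _; exact: w_sym.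
rewrite /assocS -/E -/u vol_degS /vol /degree /cut /assoc.
rewrite (sum_pair_indicator (mem E) xpredT) (sum_pair_indicator (mem E) (mem ((~: S) :\: E))).
rewrite !sum_pair_indicator mulr_suml -sumrB -!big_split /=.
by apply: eq_bigr => q _; ring.
Qed.

Lemma assocS_ge0 S A : 0 <= assocS w S A.
Proof.
have [c [c01 ->]] := assocS_pair_sum S A.
by apply: sumr_ge0 => q _; rewrite mulr_ge0 //; case/andP: (c01 q).
Qed.

Lemma assocS_le_vol S A : assocS w S A <= vol (degree w) setT.
Proof.
have [c [c01 ->]] := assocS_pair_sum S A.
rewrite /vol /degree big_set pair_big /=; apply: ler_sum => q _.
by rewrite ler_piMl //; case/andP: (c01 q).
Qed.

End AssocS.

Section Penalty.
Context {R : realFieldType} {V : finType} {p : nat}.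
Variables (M : 'I_p -> V -> R) (k l : 'I_p -> R) (dist : V -> V -> R) (d0 : R) (S : {set V}).
Implicit Type A : {set Vp S}.

Local Notation feasible := (feasible M k l dist d0 S).
Local Notation pen := (pen M k l dist d0 S).

Definition feasibleb A : bool :=
  [&& A != set0, [forall j, k j <= vol (M j) (emb A) <= l j] &
      [forall u in A, forall v in A, dist (val u) (val v) <= d0]].

Lemma feasibleP A : reflect (feasible A) (feasibleb A).
Proof.
apply: (iffP and3P) => [[A_neq0 /forallP bounds /forall_inP dists]|[A_neq0 bounds dists]].
  by split=> // u v u_in v_in; move/forall_inP: (dists u u_in); apply.
split=> //; first exact/forallP.
by apply/forall_inP => u u_in; apply/forall_inP => v v_in; apply: dists.
Qed.

Lemma pen_ge0 A : 0 <= pen A.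
Proof.
rewrite /pen; case: ifP => // _.
by rewrite !addr_ge0 ?sumr_ge0 // => *; rewrite ?sumr_ge0 // => *; rewrite le_max lexx.
Qed.

Lemma pen_feasible A : feasible A -> pen A = 0.
Proof.
case=> A_neq0 bounds dists; rewrite /pen (negbTE A_neq0).
rewrite !big1 ?addr0 // => [u u_in|j _|j _]; first rewrite big1 // => v v_in.
all: apply/max_idPl; rewrite subr_le0 ?dists //.
all: by case/andP: (bounds j).
Qed.

Lemma pen_gt0 A : A != set0 -> ~ feasible A -> 0 < pen A.
Proof.
move=> A_neq0 not_feasible; rewrite lt_def pen_ge0 andbT.
apply: contra_notN not_feasible; rewrite /pen (negbTE A_neq0).
have sum_ge0 (I : finType) (P : pred I) (F : I -> R) : 0 <= \sum_(i | P i) Num.max 0 (F i).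
  by apply: sumr_ge0 => i _; rewrite le_max lexx.
rewrite !paddr_eq0 ?addr_ge0 ?sum_ge0 //; last by apply: sumr_ge0 => u _; apply: sum_ge0.
case/andP=> /andP[/eqP above /eqP below] /eqP far.
have max_ge0 (x : R) : 0 <= Num.max 0 x by rewrite le_max lexx.
have le0 (x : R) : Num.max 0 x = 0 -> x <= 0 by move/max_idPl.
split=> // [j|u v u_in v_in].
  apply/andP; split; rewrite -subr_le0; apply: le0.
    exact: (psumr_eq0P (fun j _ => max_ge0 _) below).
  exact: (psumr_eq0P (fun j _ => max_ge0 _) above).
have far_u := psumr_eq0P (fun u _ => sum_ge0 _ _ _) far u_in.
by rewrite -subr_le0; apply: le0; exact: (psumr_eq0P (fun v _ => max_ge0 _) far_u).
Qed.

End Penalty.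

Lemma gdsp_optimal_exists {R : realFieldType} {V : finType} {p : nat}
  {w : V -> V -> R} {g : V -> R} {M : 'I_p -> V -> R} {k l : 'I_p -> R}
  {dist : V -> V -> R} {d0 : R} {S : {set V}} {A0 : {set Vp S}} :
  feasible M k l dist d0 S A0 -> exists A, gdsp_optimal w g M k l dist d0 S A.
Proof.
move/feasibleP=> A0_feasible; case: (arg_maxP (gdsp_ratio w g S) A0_feasible) => A.
by move/feasibleP=> A_feasible A_max; exists A; split=> // B /feasibleP; apply: A_max.
Qed.

Lemma gdsp_optimal_ratio {R : realFieldType} {V : finType} {p : nat}
  {w : V -> V -> R} {g : V -> R} {M : 'I_p -> V -> R} {k l : 'I_p -> R}
  {dist : V -> V -> R} {d0 : R} {S : {set V}} {A B : {set Vp S}} :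
  gdsp_optimal w g M k l dist d0 S A -> gdsp_optimal w g M k l dist d0 S B ->
  gdsp_ratio w g S A = gdsp_ratio w g S B.
Proof. by move=> [A_feasible A_max] [B_feasible B_max]; apply: le_anti; rewrite A_max ?B_max. Qed.

Definition penalized_num {R : realFieldType} {V : finType} {p : nat}
  (g : V -> R) (M : 'I_p -> V -> R) (k l : 'I_p -> R) (dist : V -> V -> R)
  (d0 gamma : R) (S : {set V}) (A : {set Vp S}) : R :=
  vol g (emb A) + vol g S * unit_set A + gamma * pen M k l dist d0 S A.

Lemma cont_objE {R : realFieldType} {V : finType} {p : nat}
  (w : V -> V -> R) (g : V -> R) (M : 'I_p -> V -> R) (k l : 'I_p -> R)
  (dist : V -> V -> R) (d0 gamma : R) (S : {set V}) (f : Vp S -> R) :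
  cont_obj w g M k l dist d0 gamma S f =
  xdiv (lovasz (penalized_num g M k l dist d0 gamma S) f) (lovasz (assocS w S) f).
Proof. by rewrite /cont_obj lovaszDZ. Qed.

Section PenalizedGDSP.
Context {R : realFieldType} {V : finType} {p : nat} {w : V -> V -> R} {S : {set V}}
  {g : V -> R} {M : 'I_p -> V -> R} {k l : 'I_p -> R} {dist : V -> V -> R} {d0 gamma : R}.
Implicit Type A : {set Vp S}.

Local Notation feasible := (feasible M k l dist d0 S).
Local Notation pen := (pen M k l dist d0 S).
Local Notation optimal := (gdsp_optimal w g M k l dist d0 S).
Local Notation ratio := (gdsp_ratio w g S).
Local Notation num := (penalized_num g M k l dist d0 gamma S).
Local Notation den A := (vol g (emb A) + vol g S).

Hypotheses (w_sym : forall i j, w i j = w j i) (w_ge0 : forall i j, 0 <= w i j)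
  (g_gt0 : forall i, 0 < g i).
Context {A0 : {set Vp S}} {theta : R}.
Hypotheses (A0_feasible : feasible A0) (A0_assocS_gt0 : 0 < assocS w S A0).
Hypothesis theta_attained : exists A, [/\ A != set0, ~ feasible A & pen A = theta].
Hypothesis theta_min : forall A, A != set0 -> ~ feasible A -> theta <= pen A.
Hypothesis gamma_large : vol (degree w) setT / theta * (den A0 / assocS w S A0) < gamma.
Context {Astar : {set Vp S}}.
Hypothesis Astar_optimal : optimal Astar.

Local Notation opt := (ratio Astar).

Lemma gdsp_den_gt0 A : A != set0 -> 0 < den A.
Proof.
move=> A_neq0; rewrite ltr_wpDr ?vol_gt0 ?emb_eq0 //.
by apply: vol_ge0 => i; apply: ltW.
Qed.

Lemma gdsp_ratio_mul_den A : A != set0 -> ratio A * den A = assocS w S A.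
Proof. by move=> A_neq0; rewrite /gdsp_ratio divfK // lt0r_neq0 ?gdsp_den_gt0. Qed.

Lemma penalized_num_feasible A : feasible A -> num A = den A.
Proof.
move=> A_feasible; have [A_neq0 _ _] := A_feasible.
by rewrite /penalized_num pen_feasible // unit_set_neq0 // mulr1 mulr0 addr0.
Qed.

Lemma gdsp_opt_gt0 : 0 < opt.
Proof.
have [A0_neq0 _ _] := A0_feasible.
apply: lt_le_trans (Astar_optimal.2 _ A0_feasible).
by rewrite /gdsp_ratio divr_gt0 ?gdsp_den_gt0.
Qed.

Lemma penalized_num_ge_feasible A : feasible A -> opt^-1 * assocS w S A <= num A.
Proof.
move=> A_feasible; have [A_neq0 _ _] := A_feasible.
rewrite penalized_num_feasible // -gdsp_ratio_mul_den // mulrA.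
apply: ler_piMl; first exact/ltW/gdsp_den_gt0.
by rewrite mulrC ler_pdivrMr ?gdsp_opt_gt0 // mul1r Astar_optimal.2.
Qed.

Lemma min_penalty_gt0 : 0 < theta.
Proof. by case: theta_attained => B [B_neq0 B_infeasible <-]; apply: pen_gt0. Qed.

Lemma penalty_weight_gt0 : 0 < gamma.
Proof.
have [A0_neq0 _ _] := A0_feasible.
apply: le_lt_trans gamma_large; apply: mulr_ge0; apply: divr_ge0.
- exact: le_trans (assocS_ge0 w_sym w_ge0 S A0) (assocS_le_vol w_sym w_ge0 S A0).
- exact/ltW/min_penalty_gt0.
- exact/ltW/gdsp_den_gt0.
- exact: assocS_ge0.
Qed.

Lemma penalized_num_ge0 A : 0 <= num A.
Proof.
have g_ge0 i : 0 <= g i by exact/ltW.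
rewrite /penalized_num !addr_ge0 ?mulr_ge0 ?vol_ge0 ?unit_set_ge0 ?pen_ge0 //.
exact/ltW/penalty_weight_gt0.
Qed.

(* The choice of gamma makes the penalty of an infeasible set outweigh
   opt^-1 * vol_d(V), which bounds opt^-1 * assoc_S from above. *)
Lemma penalized_num_gt_infeasible A : 0 < assocS w S A -> ~ feasible A ->
  opt^-1 * assocS w S A < num A.
Proof.
move=> assocS_gt0 A_infeasible; have [A0_neq0 _ _] := A0_feasible.
have A_neq0 : A != set0 by apply: contraTneq assocS_gt0 => ->; rewrite assocS_set0 ltxx.
have inv_opt_le : opt^-1 <= den A0 / assocS w S A0.
  rewrite -[den A0 / _]invf_div lef_pV2 ?posrE ?gdsp_opt_gt0 ?divr_gt0 ?gdsp_den_gt0 //.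
  exact: Astar_optimal.2.
have gamma_theta : den A0 / assocS w S A0 * vol (degree w) setT < gamma * theta.
  by move: gamma_large; rewrite mulrAC ltr_pdivrMr ?min_penalty_gt0 // mulrC.
apply: (le_lt_trans (y := den A0 / assocS w S A0 * vol (degree w) setT)).
  apply: ler_pM => //; first by rewrite invr_ge0; exact/ltW/gdsp_opt_gt0.
  - exact: assocS_ge0.
  - exact: assocS_le_vol.
apply: lt_le_trans gamma_theta _; rewrite /penalized_num ler_wpDl //.
  by rewrite addr_ge0 ?mulr_ge0 ?vol_ge0 ?unit_set_ge0 // => i; apply: ltW.
by apply: ler_wpM2l; [exact/ltW/penalty_weight_gt0 | exact: theta_min].
Qed.

Lemma penalized_num_ge A : opt^-1 * assocS w S A <= num A.
Proof.
have [assocS_gt0|] := ltP 0 (assocS w S A).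
  have [/feasibleP|/feasibleP A_infeasible] := boolP (feasibleb M k l dist d0 S A).
    exact: penalized_num_ge_feasible.
  exact/ltW/penalized_num_gt_infeasible.
by rewrite le_eqVlt ltNge assocS_ge0 // orbF => /eqP->; rewrite mulr0 penalized_num_ge0.
Qed.

Lemma penalized_num_eq_optimal A :
  0 < assocS w S A -> num A = opt^-1 * assocS w S A -> optimal A.
Proof.
move=> assocS_gt0 num_eq.
have [/feasibleP A_feasible|/feasibleP A_infeasible] := boolP (feasibleb M k l dist d0 S A).
  have [A_neq0 _ _] := A_feasible.
  have ratio_eq : ratio A = opt.
    apply: (mulIf (lt0r_neq0 (gdsp_den_gt0 _ A_neq0))); rewrite gdsp_ratio_mul_den //.
    rewrite -penalized_num_feasible // num_eq mulrA divff ?mul1r //.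
    exact/lt0r_neq0/gdsp_opt_gt0.
  by split=> // B B_feasible; rewrite ratio_eq Astar_optimal.2.
by have := penalized_num_gt_infeasible _ assocS_gt0 A_infeasible; rewrite num_eq ltxx.
Qed.

Lemma assocS_optimal_gt0 : 0 < assocS w S Astar.
Proof.
have [[Astar_neq0 _ _] _] := Astar_optimal.
by rewrite -gdsp_ratio_mul_den // mulr_gt0 ?gdsp_opt_gt0 ?gdsp_den_gt0.
Qed.

Lemma penalized_num_optimal : num Astar = opt^-1 * assocS w S Astar.
Proof.
have [[Astar_neq0 _ _] _] := Astar_optimal.
rewrite penalized_num_feasible; last exact: Astar_optimal.1.
by rewrite -gdsp_ratio_mul_den // mulrA mulVf ?mul1r // lt0r_neq0 ?gdsp_opt_gt0.
Qed.

Local Notation cont_obj := (cont_obj w g M k l dist d0 gamma S).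
Local Notation cont_minimizer := (cont_minimizer w g M k l dist d0 gamma S).

Lemma cont_obj_ge f : (forall x, 0 <= f x) -> ext_le (Some opt^-1) (cont_obj f).
Proof.
move=> f0; rewrite cont_objE.
by apply: lovasz_ratio_ge => //; [exact: assocS_ge0 | exact: penalized_num_ge].
Qed.

Lemma cont_obj_indicator : cont_obj (indicator Astar) = Some opt^-1.
Proof.
have [[Astar_neq0 _ _] _] := Astar_optimal.
rewrite cont_objE !lovasz_indicator // /xdiv (negbTE (lt0r_neq0 assocS_optimal_gt0)).
by rewrite penalized_num_optimal mulfK // lt0r_neq0 ?assocS_optimal_gt0.
Qed.

Lemma indicator_cont_minimizer : cont_minimizer (indicator Astar).
Proof.
have [[/set0Pn [a a_in] _ _] _] := Astar_optimal.
split=> [x|| h h0 _]; first exact: ler0n.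
  by exists a; rewrite /indicator a_in oner_neq0.
by rewrite cont_obj_indicator; apply: cont_obj_ge.
Qed.

Lemma cont_minimizer_obj f : cont_minimizer f -> cont_obj f = Some opt^-1.
Proof.
case=> f0 _ f_min; have [ind_ge0 ind_neq0 _] := indicator_cont_minimizer.
have := f_min _ ind_ge0 ind_neq0.
rewrite cont_obj_indicator cont_objE => le_opt.
by apply: lovasz_ratio_eq => //; [exact: assocS_ge0 | exact: penalized_num_ge].
Qed.

Lemma minimizing_level_set_optimal f : cont_minimizer f -> forall i,
  (forall j, ext_le (set_obj w g M k l dist d0 gamma S (level_set f i))
                    (set_obj w g M k l dist d0 gamma S (level_set f j))) ->
  optimal (level_set f i).
Proof.
move=> f_min i i_min; have [f0 _ _] := f_min.
have := cont_minimizer_obj _ f_min; rewrite cont_objE => obj_opt.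
have [assocS_gt0 num_eq] :=
  lovasz_ratio_level (assocS_ge0 w_sym w_ge0 S) penalized_num_ge _ _ f0 obj_opt i_min.
exact: penalized_num_eq_optimal.
Qed.

End PenalizedGDSP.

Theorem mainTheorem4 (R : realFieldType) (V : finType)
  (w : V -> V -> R)
  (hw_sym : forall i j, w i j = w j i) (hw_nn : forall i j, 0 <= w i j)
  (hw_diag : forall i, w i i = 0)
  (S : {set V}) (g : V -> R) (hg : forall i, 0 < g i)
  (p : nat) (M : 'I_p -> V -> R) (hM : forall j i, 0 <= M j i)
  (k l : 'I_p -> R)
  (dist : V -> V -> R) (hdist_sym : forall u v, dist u v = dist v u)
  (hdist_nn : forall u v, 0 <= dist u v) (hdist_diag : forall u, dist u u = 0)
  (d0 : R) (hd0 : 0 <= d0)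
  (A0 : {set Vp S}) (hA0 : feasible M k l dist d0 S A0) (hA0pos : 0 < assocS w S A0)
  (theta : R)
  (htheta_att : exists A : {set Vp S},
      [/\ A != set0, ~ feasible M k l dist d0 S A & pen M k l dist d0 S A = theta])
  (htheta_min : forall A : {set Vp S}, A != set0 -> ~ feasible M k l dist d0 S A ->
      theta <= pen M k l dist d0 S A)
  (gamma : R)
  (hgamma : vol (degree w) setT / theta * ((vol g (emb A0) + vol g S) / assocS w S A0)
            < gamma) :
  (exists fstar : Vp S -> R, cont_minimizer w g M k l dist d0 gamma S fstar)
  /\ (exists A : {set Vp S}, gdsp_optimal w g M k l dist d0 S A)
  /\ (forall fstar : Vp S -> R, cont_minimizer w g M k l dist d0 gamma S fstar ->
        forall A : {set Vp S}, gdsp_optimal w g M k l dist d0 S A ->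
          cont_obj w g M k l dist d0 gamma S fstar = Some (gdsp_ratio w g S A)^-1)
  /\ (forall fstar : Vp S -> R, cont_minimizer w g M k l dist d0 gamma S fstar ->
        forall i : Vp S,
          (forall j : Vp S,
             ext_le (set_obj w g M k l dist d0 gamma S (level_set fstar i))
                    (set_obj w g M k l dist d0 gamma S (level_set fstar j))) ->
          gdsp_optimal w g M k l dist d0 S (level_set fstar i)).
Proof.
have [Astar Astar_opt] : exists A, gdsp_optimal w g M k l dist d0 S A :=
  gdsp_optimal_exists hA0.
have ind_min := indicator_cont_minimizer
  hw_sym hw_nn hg hA0 hA0pos htheta_att htheta_min hgamma Astar_opt.
have min_obj := cont_minimizer_obj
  hw_sym hw_nn hg hA0 hA0pos htheta_att htheta_min hgamma Astar_opt.
have level_opt := minimizing_level_set_optimal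
  hw_sym hw_nn hg hA0 hA0pos htheta_att htheta_min hgamma Astar_opt.
split; first by exists (indicator Astar).
split; first by exists Astar.
split; last exact: level_opt.
by move=> f f_min A A_opt; rewrite min_obj // (gdsp_optimal_ratio A_opt Astar_opt).
Qed.
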